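(* Let $n\ge 5$ be odd and let $G$ be a connected oriented graph. The following are equivalent: (i) $G\to AC_n$; (ii) for every even integer $l$ with $4\le l\le n+1$, there is no semi-walk in $G$ following the same pattern as $Q_l$; (iii) $Q_{n+1}\not\to G$. Moreover, if $G$ has a vertex with both an in-neighbour and an out-neighbour, these are also equivalent to: (iv) with $(A_0,A_1,\dots,A_m,D_m,\dots,D_1)$ the $n$-cyclic cover of $G$ ($m=\frac{n-1}{2}$), the map $\varphi:V_G\to V_{AC_n}$ given by $\varphi(x)=a_i$ for $x\in A_i$ ($0\le i\le m$) and $\varphi(x)=a_{n-i}$ for $x\in D_i$ ($1\le i\le m$) is a homomorphism $G\to AC_n$.
   Context: An oriented graph is a digraph with no loops and no pair of opposite arcs. A homomorphism $G\to H$ is a vertex map sending arcs to arcs. A semi-walk in $D$ is a sequence $v_1a_1v_2\dots a_{k-1}v_k$ of (not necessarily distinct) vertices and arcs with $a_i$ having endpoints $v_i,v_{i+1}$; $a_i$ is forward if $a_i=(v_i,v_{i+1})$ and backward otherwise; its pattern is the word $l_1\dots l_{k-1}$ over $\{\to,\leftarrow\}$ with $l_i=\to$ iff $a_i$ is forward. The pattern of an oriented path $(p_0,\dots,p_k)$ is defined likewise. For $n\ge 3$, $Q_n$ is the oriented path $(q_0,\dots,q_{n-1})$ on $n$ vertices such that: the first two arcs $q_0q_1,q_1q_2$ are forward; the subpath $(q_1,\dots,q_{n-2})$ is alternating (consecutive arcs have opposite directions); and the last two arcs have the same direction. For $n\ge 3$, $AC_n$ is the oriented cycle with vertices $a_0,\dots,a_{n-1}$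 obtained from the path $(a_0,\dots,a_n)$ in which the arc between $a_i$ and $a_{i+1}$ is $a_i\to a_{i+1}$ if $i$ is even and $a_{i+1}\to a_i$ if $i$ is odd, by identifying $a_n$ with $a_0$. The $n$-cyclic cover (for odd $n\ge5$, $m=\frac{n-1}{2}$, and connected $G$ with a vertex having both in- and out-neighbours): $A_0=\{v: d^-(v)>0, d^+(v)>0\}$; $A_1$ = vertices of $V_G\setminus A_0$ with an in-neighbour in $A_0$; $D_1$ = vertices of $V_G\setminus A_0$ with an out-neighbour in $A_0$; $C_1=A_0\cup A_1\cup D_1$; for $i=2,\dots,m-1$, $D_i$ = vertices of $V_G\setminus C_{i-1}$ with a neighbour in $D_{i-1}$, $A_i$ = vertices of $V_G\setminus C_{i-1}$ with a neighbour in $A_{i-1}$, $C_i=C_{i-1}\cup A_i\cup D_i$; finally, if every vertex of $A_{m-1}$ has out-degree $0$ and every vertex of $D_{m-1}$ has in-degree $0$, $D_m$ = vertices of $V_G\setminus C_{m-1}$ with no out-neighbours and $A_m$ = vertices of $V_G\setminus C_{m-1}$ with no in-neighbours; otherwise $D_m$ = vertices of $V_G\setminus C_{m-1}$ with no in-neighbours and $A_m$ = vertices of $V_G\setminus C_{m-1}$ with no out-neighbours. The cover is $(A_0,A_1,\dots,A_m,D_m,\dots,D_1)$. *)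

From mathcomp Require Import all_boot.
Set Implicit Arguments. Unset Strict Implicit. Unset Printing Implicit Defensive.

(* A (finite) digraph is a relation E : rel T on a finType T; E x y means
   there is an arc x -> y. *)

Definition oriented (T : finType) (E : rel T) : Prop :=
  (forall x, ~~ E x x) /\ (forall x y, E x y -> ~~ E y x).

Definition wconnected (T : finType) (E : rel T) : Prop :=
  forall x y, connect (fun a b => E a b || E b a) x y.

(* The oriented cycle AC_n on vertices a_0..a_{n-1} = 'I_n :
   arc a_i -> a_{i+1 mod n} for i even, a_{i+1} -> a_i for i odd. *)
Definition AC (n : nat) : rel 'I_n :=
  fun x y => ((y == x.+1 %% n :> nat) && ~~ odd x)
          || ((x == y.+1 %% n :> nat) && odd y).

(* Direction (true = forward) of the arc between q_i and q_{i+1} in Q_k,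
   for i <= k-2: arcs 0,1 forward, arcs 1..k-3 alternate, arc k-2 has
   the same direction as arc k-3. *)
Definition dirQ (k i : nat) : bool :=
  if i <= 1 then true else if i <= k - 3 then odd i else odd (k - 3).

Definition Qrel (k : nat) : rel 'I_k :=
  fun x y => ((y == x.+1 :> nat) && dirQ k x) || ((x == y.+1 :> nat) && ~~ dirQ k y).

Definition patQ (k : nat) : seq bool := [seq dirQ k i | i <- iota 0 k.-1].

(* follows E x w s : the vertex sequence x :: s is a semi-walk of pattern w
   (in an oriented graph the arcs are determined by their endpoints). *)
Fixpoint follows (T : finType) (E : rel T) (x : T) (w : seq bool) (s : seq T) : bool :=
  match w, s with
  | [::], [::] => true
  | b :: w', y :: s' => (if b then E x y else E y x) && follows E y w' s'
  | _, _ => false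
  end.

Definition has_semiwalk (T : finType) (E : rel T) (w : seq bool) : Prop :=
  exists (x : T) (s : seq T), follows E x w s.

Definition homAC (T : finType) (E : rel T) (n : nat) : Prop :=
  exists f : T -> 'I_n, forall x y, E x y -> AC (f x) (f y).

Definition homQ (T : finType) (E : rel T) (k : nat) : Prop :=
  exists f : 'I_k -> T, forall i j, Qrel i j -> E (f i) (f j).

Section Cover.
Variables (T : finType) (E : rel T).

Definition A0 : {set T} := [set x | [exists y, E y x] && [exists y, E x y]].

Definition A1 : {set T} := [set x | (x \notin A0) && [exists y in A0, E y x]].
Definition D1 : {set T} := [set x | (x \notin A0) && [exists y in A0, E x y]].

(* lay k = (A_k, D_k, C_k) for 1 <= k; lay 0 = (A_0, set0, A_0). *)
Fixpoint lay (k : nat) : {set T} * {set T} * {set T} :=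
  match k with
  | 0 => (A0, set0, A0)
  | k'.+1 =>
    if k' is 0 then (A1, D1, A0 :|: A1 :|: D1)
    else
      let: (Ap, Dp, Cp) := lay k' in
      let Dk := [set x | (x \notin Cp) && [exists y in Dp, E x y || E y x]] in
      let Ak := [set x | (x \notin Cp) && [exists y in Ap, E x y || E y x]] in
      (Ak, Dk, Cp :|: Ak :|: Dk)
  end.

Definition coverA (m i : nat) : {set T} :=
  if i < m then (lay i).1.1
  else
    let: (Ap, Dp, Cp) := lay m.-1 in
    if [forall x in Ap, [forall y, ~~ E x y]] && [forall x in Dp, [forall y, ~~ E y x]]
    then [set x | (x \notin Cp) && [forall y, ~~ E y x]]
    else [set x | (x \notin Cp) && [forall y, ~~ E x y]].

Definition coverD (m i : nat) : {set T} :=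
  if i < m then (lay i).1.2
  else
    let: (Ap, Dp, Cp) := lay m.-1 in
    if [forall x in Ap, [forall y, ~~ E x y]] && [forall x in Dp, [forall y, ~~ E y x]]
    then [set x | (x \notin Cp) && [forall y, ~~ E x y]]
    else [set x | (x \notin Cp) && [forall y, ~~ E y x]].

(* phiRel n x j : phi(x) = a_j according to the cover, m = (n-1)/2:
   x \in A_i (0 <= i <= m) gives a_i ; x \in D_i (1 <= i <= m) gives a_{n-i}. *)
Definition phiRel (n : nat) (x : T) (j : 'I_n) : Prop :=
  let m := n.-1./2 in
  (exists i, i <= m /\ x \in coverA m i /\ (j : nat) = i)
  \/ (exists i, 1 <= i <= m /\ x \in coverD m i /\ (j : nat) = n - i).

End Cover.

(* (iv): phi is a well-defined map V_G -> V_{AC_n} and a homomorphism. *)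
Definition cover_hom (T : finType) (E : rel T) (n : nat) : Prop :=
  (forall x : T, exists! j : 'I_n, @phiRel T E n x j) /\
  (forall x y (i j : 'I_n), E x y -> @phiRel T E n x i -> @phiRel T E n y j -> AC i j).

From Pilot Require Import Defs.
From mathcomp Require Import all_boot zify.
Set Implicit Arguments. Unset Strict Implicit. Unset Printing Implicit Defensive.

(* A semi-walk of pattern Q_l (l even) is an arc into a vertex a of A_0, an
   alternating semi-walk of odd length l - 3 from a to b in A_0 whose first
   and last arcs are forward, and an arc out of b.  Backtracking lengthens
   such "A_0-links" by two, so (ii) and (iii) both say that G has no A_0-link
   of length n - 2.  In AC_n the only vertex of A_0 is a_0, and an alternating
   walk from a_0 back to a_0 winds around the cycle, so it has length at
   least n: homomorphisms to AC_n exclude short links.  Conversely, without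
   short links every layer A_i, D_i of the cyclic cover is reached from A_0
   by alternating walks of length i, so the parity of i fixes the direction
   of every arc at the layer, A_i and D_i are not adjacent below the last
   layer, and arcs join consecutive layers: this is exactly what makes phi a
   homomorphism. *)

Section AlternatingWalks.
Variables (T : finType) (E : rel T).

Definition adj : rel T := fun x y => E x y || E y x.

(* The step (x, b) -> (y, ~~ b) uses the arc x -> y when b holds and y -> x
   otherwise: walks of this relation are the semi-walks of E whose pattern
   alternates, and the boolean records the direction of the next arc. *)
Definition alt_arc : rel (T * bool) :=
  fun u v => (u.2 != v.2) && (if u.2 then E u.1 v.1 else E v.1 u.1).

Definition alt_walk (L : nat) (u v : T * bool) : Prop :=
  exists p, [/\ size p = L, path alt_arc u p & last u p = v].

Lemma alt_arcC u v : alt_arc u v = alt_arc v u.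
Proof. by case: u v => x [] [y []]. Qed.

Lemma alt_walk0 u : alt_walk 0 u u.
Proof. by exists [::]. Qed.

Lemma alt_walk1 u v : alt_arc u v -> alt_walk 1 u v.
Proof. by move=> h; exists [:: v]; rewrite /= h. Qed.

Lemma alt_walk_cat L1 L2 u v w :
  alt_walk L1 u v -> alt_walk L2 v w -> alt_walk (L1 + L2) u w.
Proof.
case=> p [<- Pp <-] [q [<- Pq <-]]; exists (p ++ q).
by rewrite size_cat cat_path Pp Pq last_cat.
Qed.

Lemma alt_walk_rcons L u v w :
  alt_walk L u v -> alt_arc v w -> alt_walk L.+1 u w.
Proof. by move=> h1 h2; rewrite -addn1; apply: alt_walk_cat h1 (alt_walk1 h2). Qed.

Lemma alt_walk_rev L u v : alt_walk L u v -> alt_walk L v u.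
Proof.
case=> p [<- Pp <-]; elim: p u Pp => [|y p IH] u /=; first by move=> _; apply: alt_walk0.
case/andP=> h1 /IH h; rewrite -addn1.
by apply: alt_walk_cat h (alt_walk1 _); rewrite alt_arcC.
Qed.

Lemma alt_walkS_first L u v :
  alt_walk L.+1 u v -> exists w, alt_arc u w /\ alt_walk L w v.
Proof. by case=> [[|y p]] [//= [Hs] /andP [h1 h2] Hl]; exists y; split; last exists p. Qed.

Lemma alt_walkS_last L u v :
  alt_walk L.+1 u v -> exists w, alt_walk L u w /\ alt_arc w v.
Proof.
case=> p [Hs Pp Hl]; case/lastP: p Hs Pp Hl => [|p y] //.
rewrite size_rcons rcons_path last_rcons => -[Hs] /andP [h1 h2] <-.
by exists (last u p); split => //; exists p.
Qed.

(* Going back and forth along the first arc lengthens a walk by two. *)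
Lemma alt_walk_add_double L k u v :
  0 < L -> alt_walk L u v -> alt_walk (L + k.*2) u v.
Proof.
case: L => // L _ h; elim: k => [|k IH]; first by rewrite addn0.
have [w [uw _]] := alt_walkS_first h.
have uu : alt_walk 2 u u by apply: alt_walk_rcons (alt_walk1 uw) _; rewrite alt_arcC.
by rewrite doubleS -addn2 addnA addnC; apply: alt_walk_cat uu IH.
Qed.

Definition has_in x := [exists y, E y x].
Definition has_out x := [exists y, E x y].

Lemma mem_A0 x : (x \in A0 E) = has_in x && has_out x.
Proof. by rewrite inE. Qed.

Lemma alt_walkS_end L u y c :
  alt_walk L.+1 u (y, c) -> if c then has_out y else has_in y.
Proof.
case/alt_walkS_last=> -[z b] [_] /andP [/= bc].
by case: c bc; case: b => //= _ h; apply/existsP; exists z.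
Qed.

Lemma alt_walkS_end_notin_A0 L u x c : alt_walk L.+1 u (x, c) -> x \notin A0 E ->
  (forall z, E x z -> c) /\ (forall z, E z x -> ~~ c).
Proof.
move=> /alt_walkS_end + xA0; rewrite mem_A0 in xA0.
by case: c => /= xc; split => // z xz; case/negP: xA0; rewrite xc ?andbT //;
  apply/existsP; exists z.
Qed.

(* A vertex outside A_0 is a source or a sink, so an alternating walk ending
   there continues along any arc at it. *)
Lemma alt_walk_extend L u y c x : alt_walk L.+1 u (y, c) -> y \notin A0 E ->
  adj x y -> alt_walk L.+2 u (x, ~~ c).
Proof.
move=> w yA0 xy; have [yc cy] := alt_walkS_end_notin_A0 w yA0.
apply: (alt_walk_rcons w); rewrite /alt_arc /=.
by case: c w yc cy => /= w yc cy; case/orP: xy => // h; [have := cy _ h | have := yc _ h].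
Qed.

(* An alternating walk of length L from a to b in A_0 whose first and last
   arcs are forward; preceded by an arc into a and followed by an arc out of b
   it is a semi-walk of pattern Q_(L+3). *)
Definition A0_link (L : nat) : Prop :=
  exists a b, [/\ a \in A0 E, b \in A0 E & alt_walk L (a, true) (b, false)].

Lemma A0_link_le L K :
  odd L -> odd K -> L <= K -> A0_link L -> A0_link K.
Proof.
move=> oL oK LK [a [b [ha hb w]]]; exists a, b; split => //.
have -> : K = L + ((K - L)./2).*2 by lia.
by apply: alt_walk_add_double w; lia.
Qed.

Lemma follows_size x w s : follows E x w s -> size w = size s.
Proof. by elim: w x s => [|b w IH] x [|y s] //= /andP [_ /IH ->]. Qed.

Lemma follows_cat x w1 w2 s1 s2 : size w1 = size s1 ->
  follows E x (w1 ++ w2) (s1 ++ s2) =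
  follows E x w1 s1 && follows E (last x s1) w2 s2.
Proof. by elim: w1 x s1 => [|b w IH] x [|y s] //= [/IH ->]; rewrite andbA. Qed.

Lemma alt_path_follows u p :
  path alt_arc u p -> follows E u.1 (map snd (belast u p)) (map fst p).
Proof. by elim: p u => [|y p IH] u //= /andP [/andP [_ ->] /IH]. Qed.

Lemma alt_path_phases u p k : path alt_arc u p -> u.2 = odd k ->
  map snd (belast u p) = map odd (iota k (size p)).
Proof.
elim: p u k => [|y p IH] u k //= /andP [/andP [uy _] yp] uk.
by rewrite uk (IH y k.+1) //=; move: uy; rewrite uk; case: (y.2); case: (odd k).
Qed.

Lemma follows_alt_walk L k x s : follows E x (map odd (iota k L)) s ->
  alt_walk L (x, odd k) (last x s, odd (k + L)).
Proof.
elim: L k x s => [|L IH] k x [|y s] //=; first by rewrite addn0 => _; apply: alt_walk0.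
case/andP=> xy /IH w; rewrite addnS -addSn -add1n.
by apply: alt_walk_cat w; apply: alt_walk1; rewrite /alt_arc /=; case: (odd k) xy.
Qed.

Lemma patQ_odd L :
  odd L -> patQ (L + 3) = true :: map odd (iota 1 L) ++ [:: true].
Proof.
move=> oL; rewrite /patQ addn3.
have -> : iota 0 L.+3.-1 = 0 :: iota 1 L ++ [:: L.+1].
  by rewrite (_ : L.+3.-1 = 1 + (L + 1)) ?iotaD ?add1n //; lia.
rewrite /= map_cat /= /dirQ /= subSS subSS subn1 /=; congr (_ :: _ ++ _).
  apply/eq_in_map => i; rewrite mem_iota => /andP [i1 iL].
  by case: ifP => [i1'|_]; [have -> : i = 1 by lia | rewrite ifT //; lia].
by rewrite ltnn oL; case: (L < 1).
Qed.

Lemma semiwalk_patQP l : ~~ odd l -> 4 <= l ->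
  has_semiwalk E (patQ l) <-> A0_link (l - 3).
Proof.
move=> el l4; have [L eL oL] : exists2 L, l = L + 3 & odd L.
  by exists (l - 3); lia.
subst l; clear el l4; rewrite addnK patQ_odd //; split.
- case=> x [[|y s]] //= /andP [xy] /[dup] /follows_size.
  rewrite size_cat size_map size_iota addn1.
  case/lastP: s => [//|s1 z]; rewrite size_rcons => -[sz].
  rewrite -cats1 follows_cat ?size_map ?size_iota //.
  case/andP=> /follows_alt_walk /= w /= /andP [hz _].
  rewrite add0n oL /= in w; exists y, (last y s1); split => //.
  + rewrite mem_A0; apply/andP; split; first by apply/existsP; exists x.
    case: L oL w {sz} => // L' _ /alt_walkS_first [[w c] [/andP [_ /= yw] _]].
    by apply/existsP; exists w.
  + rewrite mem_A0 andbC; apply/andP; split; first by apply/existsP; exists z.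
    by case: L oL w {sz} => // L' _ /alt_walkS_end.
- case=> a [b [ha hb [p [<- Pp lp]]]].
  move: ha hb; rewrite !mem_A0 => /andP [/existsP [w hw] _] /andP [_ /existsP [z hz]].
  exists w, (a :: map fst p ++ [:: z]); rewrite /= hw /=.
  rewrite follows_cat; last by rewrite size_map size_map size_iota.
  rewrite -(alt_path_phases Pp (k := 1)) // (alt_path_follows Pp) /=.
  by rewrite (last_map fst p (a, true)) lp hz.
Qed.

Lemma follows_nth d x w s i : follows E x w s -> i < size w ->
  if nth false w i then E (nth d (x :: s) i) (nth d (x :: s) i.+1)
  else E (nth d (x :: s) i.+1) (nth d (x :: s) i).
Proof.
elim: w x s i => [|b w IH] x [|y s] [|i] //= /andP [h1 h2] hi //; exact: IH.
Qed.

Lemma homQ_semiwalkP k : 0 < k -> homQ E k <-> has_semiwalk E (patQ k).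
Proof.
case: k => // k _; split.
  case=> f hf; exists (f (inord 0)), (map (fun i => f (inord i)) (iota 1 k)).
  rewrite /patQ /=; suff: forall r j, j + r <= k -> follows E (f (inord j))
      (map (dirQ k.+1) (iota j r)) (map (fun i => f (inord i)) (iota j.+1 r)) by apply.
  elim=> [|r IH] j hj //=; rewrite IH ?andbT; last lia.
  by case: ifP => hd; apply: hf; rewrite /Qrel !inordK ?hd ?eqxx ?orbT //; lia.
case=> x [s hf]; exists (fun i => nth x (x :: s) i) => i j.
have nthQ t : t < k -> nth false (patQ k.+1) t = dirQ k.+1 t.
  by move=> tk; rewrite /patQ (nth_map 0) ?size_iota // nth_iota.
have step t : t < k -> if dirQ k.+1 t
    then E (nth x (x :: s) t) (nth x (x :: s) t.+1)
    else E (nth x (x :: s) t.+1) (nth x (x :: s) t).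
  by move=> tk; rewrite -nthQ //; apply: follows_nth hf _; rewrite size_map size_iota.
have hi := ltn_ord i; have hj := ltn_ord j.
rewrite /Qrel => /orP [/andP [/eqP e d]|/andP [/eqP e d]].
  by have := step i; rewrite d e; apply; lia.
by have := step j; rewrite (negbTE d) e; apply; lia.
Qed.

End AlternatingWalks.

Lemma alt_walk_hom (T T' : finType) (E : rel T) (E' : rel T') (f : T -> T') L u v :
  (forall x y, E x y -> E' (f x) (f y)) -> alt_walk E L u v ->
  alt_walk E' L (f u.1, u.2) (f v.1, v.2).
Proof.
move=> hf [p [<- Pp <-]]; exists [seq (f z.1, z.2) | z <- p]; split.
- by rewrite size_map.
- elim: p u Pp => [|y p IH] u //= /andP [/andP [h1 h2] h3].
  rewrite IH // andbT /alt_arc /= h1 /=; case: (u.2) h2; exact: hf.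
- by rewrite (last_map (fun z => (f z.1, z.2))).
Qed.

Lemma ord_succ_mod k (x : 'I_k) :
  x.+1 %% k = x.+1 /\ x.+1 < k \/ x.+1 %% k = 0 /\ x.+1 = k.
Proof.
have := ltn_ord x; rewrite leq_eqVlt => /orP [/eqP ->|xk]; first by rewrite modnn; right.
by rewrite modn_small //; left.
Qed.

Section CycleAC.
Variable n : nat.
Hypothesis n_odd : odd n.
Local Notation m := n.-1./2.

Lemma AC_in_out (x y z : 'I_n) : Defs.AC y x -> Defs.AC x z -> x = 0 :> nat.
Proof.
rewrite /Defs.AC => /orP [] /andP [/eqP yx p] /orP [] /andP [/eqP xz q].
- by move: (ord_succ_mod y); lia.
- by move: (ord_succ_mod y) (ord_succ_mod z); lia.
- by rewrite p in q.
- by move: (ord_succ_mod z); lia.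
Qed.

(* One step of an alternating walk in AC_n raises this height by at most one;
   it is 0 at (a_0, true) and n at (a_0, false). *)
Definition AC_height (u : 'I_n * bool) : nat :=
  if u.2 then nat_of_ord u.1 else if u.1 == 0 :> nat then n else u.1.

Lemma alt_arc_height u v :
  alt_arc (@Defs.AC n) u v -> AC_height v <= (AC_height u).+1.
Proof.
case: u v => x b [y c]; move: (ord_succ_mod x) (ord_succ_mod y).
rewrite /alt_arc /AC_height /Defs.AC /=; case: b; case: c => //= ox oy.
all: by case/orP=> /andP [/eqP xy p]; case: eqP; lia.
Qed.

Lemma alt_walk_height L u v :
  alt_walk (@Defs.AC n) L u v -> AC_height v <= AC_height u + L.
Proof.
case=> p [<- Pp <-]; elim: p u Pp => [|y p IH] u /=; first by rewrite addn0.
case/andP=> /alt_arc_height uy /IH yp; rewrite addnS -addSn.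
by apply: leq_trans yp _; rewrite leq_add2r.
Qed.

Lemma homAC_no_A0_link (T : finType) (E : rel T) L :
  homAC E n -> L < n -> ~ A0_link E L.
Proof.
case=> f hf Ln [a [b [ha hb /(alt_walk_hom hf) /alt_walk_height]]].
rewrite !mem_A0 in ha hb.
case/andP: ha => /existsP [a1 /hf a1a] /existsP [a2 /hf aa2].
case/andP: hb => /existsP [b1 /hf b1b] /existsP [b2 /hf bb2].
by rewrite /AC_height /= (AC_in_out a1a aa2) (AC_in_out b1b bb2) /=; lia.
Qed.

Lemma homAC_without_A0 (T : finType) (E : rel T) :
  1 < n -> (forall x, x \notin A0 E) -> homAC E n.
Proof.
move=> n1 noA0; have n0 : 0 < n by apply: ltnW.
exists (fun x => if has_out E x then Ordinal n0 else Ordinal n1) => x y xy.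
have -> : has_out E x by apply/existsP; exists y.
have -> : has_out E y = false.
  by apply/negbTE/negP => yo; case/negP: (noA0 y); rewrite mem_A0 yo andbT; apply/existsP; exists x.
by rewrite /Defs.AC /= modn_small.
Qed.

Lemma AC_of_levels (i j : 'I_n) :
  ~~ odd i -> odd j || (j == 0 :> nat) ->
  minn j (n - j) <= (minn i (n - i)).+1 -> minn i (n - i) <= (minn j (n - j)).+1 ->
  (i + j = n -> m <= minn i j) -> (i = 0 :> nat -> 0 < j) -> Defs.AC i j.
Proof.
move=> ie jz lji lij sep zero; have ilt := ltn_ord i; have jlt := ltn_ord j.
rewrite /Defs.AC ie /=; case/orP: jz => [jo|/eqP j0].
  have [ij|ji] : j = i.+1 :> nat \/ i = j.+1 :> nat by lia.
    by rewrite ij modn_small ?eqxx //; lia.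
  by apply/orP; right; rewrite ji modn_small ?eqxx ?jo //; lia.
have -> : nat_of_ord i = n.-1 by lia.
by rewrite j0 prednK ?modnn // (leq_ltn_trans _ ilt).
Qed.

Lemma AC_level_inj (i j : 'I_n) : minn i (n - i) = minn j (n - j) ->
  [\/ odd i = odd j, i = 0 :> nat | j = 0 :> nat] -> i = j.
Proof. by move=> lev par; apply: ord_inj; move: (ltn_ord i) (ltn_ord j); case: par; lia. Qed.

End CycleAC.

Section Layers.
Variables (T : finType) (E : rel T).

Local Notation Ak k := (lay E k).1.1.
Local Notation Dk k := (lay E k).1.2.
Local Notation Ck k := (lay E k).2.

Lemma laySS k : lay E k.+2 = let: (Ap, Dp, Cp) := lay E k.+1 in
   ([set x | (x \notin Cp) && [exists y in Ap, adj E x y]],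
    [set x | (x \notin Cp) && [exists y in Dp, adj E x y]],
    Cp :|: [set x | (x \notin Cp) && [exists y in Ap, adj E x y]]
       :|: [set x | (x \notin Cp) && [exists y in Dp, adj E x y]]).
Proof. by []. Qed.

Lemma mem_layA1 x : (x \in Ak 1) = (x \notin A0 E) && [exists y in A0 E, E y x].
Proof. by rewrite inE. Qed.

Lemma mem_layD1 x : (x \in Dk 1) = (x \notin A0 E) && [exists y in A0 E, E x y].
Proof. by rewrite inE. Qed.

Lemma mem_layAS k x : 0 < k ->
  (x \in Ak k.+1) = (x \notin Ck k) && [exists y in Ak k, adj E x y].
Proof. by case: k => // k _; rewrite laySS; case: (lay E k.+1) => [[Ap Dp] Cp]; rewrite inE. Qed.

Lemma mem_layDS k x : 0 < k ->
  (x \in Dk k.+1) = (x \notin Ck k) && [exists y in Dk k, adj E x y].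
Proof. by case: k => // k _; rewrite laySS; case: (lay E k.+1) => [[Ap Dp] Cp]; rewrite inE. Qed.

Lemma mem_layCS k x : (x \in Ck k.+1) = [|| x \in Ck k, x \in Ak k.+1 | x \in Dk k.+1].
Proof.
case: k => [|k]; first by rewrite /= !inE orbA.
by rewrite laySS; case: (lay E k.+1) => [[Ap Dp] Cp]; rewrite /= !inE orbA.
Qed.

Lemma subset_layC j k : j <= k -> {subset Ck j <= Ck k}.
Proof.
elim: k => [|k IH]; first by rewrite leqn0 => /eqP ->.
by rewrite leq_eqVlt => /orP [/eqP -> //|/IH jk] x /jk; rewrite mem_layCS => ->.
Qed.

Lemma A0_sub_layC k : {subset A0 E <= Ck k}.
Proof. exact: subset_layC (leq0n k). Qed.

Lemma notin_layC_A0 k x : x \notin Ck k -> x \notin A0 E.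
Proof. exact/contra/A0_sub_layC. Qed.

Lemma layAS_notin_layC k x : x \in Ak k.+1 -> x \notin Ck k.
Proof. by case: k => [|k]; [rewrite mem_layA1 | rewrite mem_layAS] => // /andP []. Qed.

Lemma layDS_notin_layC k x : x \in Dk k.+1 -> x \notin Ck k.
Proof. by case: k => [|k]; [rewrite mem_layD1 | rewrite mem_layDS] => // /andP []. Qed.

Lemma layA_sub_layC k x : x \in Ak k -> x \in Ck k.
Proof. by case: k => [//|k] xA; rewrite mem_layCS xA orbT. Qed.

Lemma layD_sub_layC k x : x \in Dk k -> x \in Ck k.
Proof. by case: k => [|k] xD; [rewrite inE in xD | rewrite mem_layCS xD !orbT]. Qed.

Lemma layC_adj k x y : x \in Ck k -> adj E x y -> y \in Ck k.+1.
Proof.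
elim: k x y => [|k IH] x y.
  rewrite mem_layCS mem_layA1 mem_layD1 /= => xA0 xy.
  case: (boolP (y \in A0 E)) => //= _.
  by case/orP: xy => xy; apply/orP; [left|right]; apply/existsP; exists x; rewrite xA0.
have layC_S z : z \in Ck k.+1 -> z \in Ck k.+2 by apply: subset_layC.
move=> xC xy; case: (boolP (y \in Ck k.+1)) => [/layC_S //|yC].
rewrite mem_layCS in xC; case/or3P: xC => [xC|xA|xD].
- by rewrite (IH _ _ xC xy) in yC.
- rewrite mem_layCS mem_layAS // yC andTb; apply/or3P/Or32/existsP.
  by exists x; rewrite xA /adj orbC.
- rewrite mem_layCS mem_layDS // yC andTb; apply/or3P/Or33/existsP.
  by exists x; rewrite xD /adj orbC.
Qed.

Lemma layC_cases k x : x \in Ck k ->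
  x \in A0 E \/ exists i, [/\ 0 < i, i <= k & (x \in Ak i) || (x \in Dk i)].
Proof.
elim: k => [|k IH]; first by left.
rewrite mem_layCS => /or3P [/IH [|[i [i0 ik xi]]]|xA|xD]; first by left.
- by right; exists i; split => //; apply: leqW.
- by right; exists k.+1; rewrite xA.
- by right; exists k.+1; rewrite xD orbT.
Qed.

Lemma layS_alt_walk k :
  (forall x, x \in Ak k.+1 ->
     exists2 a, a \in A0 E & alt_walk E k.+1 (a, true) (x, ~~ odd k.+1)) /\
  (forall x, x \in Dk k.+1 ->
     exists2 a, a \in A0 E & alt_walk E k.+1 (a, false) (x, odd k.+1)).
Proof.
elim: k => [|k [IHA IHD]]; split => x.
- rewrite mem_layA1 => /andP [_ /existsP [a /andP [aA0 ax]]].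
  by exists a => //; apply: alt_walk1; rewrite /alt_arc /= ax.
- rewrite mem_layD1 => /andP [_ /existsP [a /andP [aA0 xa]]].
  by exists a => //; apply: alt_walk1; rewrite /alt_arc /= xa.
- rewrite mem_layAS // => /andP [_ /existsP [y /andP [yA xy]]].
  have [a aA0 w] := IHA _ yA; exists a => //.
  by have := alt_walk_extend w (notin_layC_A0 (layAS_notin_layC yA)) xy; rewrite /= negbK.
- rewrite mem_layDS // => /andP [_ /existsP [y /andP [yD xy]]].
  have [a aA0 w] := IHD _ yD; exists a => //.
  exact: alt_walk_extend w (notin_layC_A0 (layDS_notin_layC yD)) xy.
Qed.

Lemma layAS_phase k x : x \in Ak k.+1 ->
  (forall z, E x z -> ~~ odd k.+1) /\ (forall z, E z x -> odd k.+1).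
Proof.
move=> xA; have [a _ w] := (layS_alt_walk k).1 _ xA.
have [out in_] := alt_walkS_end_notin_A0 w (notin_layC_A0 (layAS_notin_layC xA)).
by split => z xz; [apply: out xz | rewrite -[odd _]negbK; apply: in_ xz].
Qed.

Lemma layDS_phase k x : x \in Dk k.+1 ->
  (forall z, E x z -> odd k.+1) /\ (forall z, E z x -> ~~ odd k.+1).
Proof.
move=> xD; have [a _ w] := (layS_alt_walk k).2 _ xD.
exact: alt_walkS_end_notin_A0 w (notin_layC_A0 (layDS_notin_layC xD)).
Qed.

Lemma layAD_link k x y : x \in Ak k.+1 -> y \in Dk k.+1 -> adj E x y ->
  A0_link E (k.+2 + k.+1).
Proof.
move=> xA yD xy; have [a aA0 wa] := (layS_alt_walk k).1 x xA.
have [b bA0 wb] := (layS_alt_walk k).2 y yD.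
have [xout xin] := layAS_phase xA.
have xy' : alt_arc E (x, ~~ odd k.+1) (y, odd k.+1).
  move: xout xin; rewrite /alt_arc /=; case: (odd k) => /= xout xin;
  by case/orP: xy => h; rewrite ?h //; first [by have := xin _ h | by have := xout _ h].
by exists a, b; split => //; apply: alt_walk_cat (alt_walk_rcons wa xy') (alt_walk_rev wb).
Qed.

End Layers.

Section CyclicCover.
Variables (T : finType) (E : rel T) (n : nat).
Hypotheses (n_gt4 : 4 < n) (n_odd : odd n) (E_connected : wconnected E).
Hypothesis no_link : ~ A0_link E (n - 2).
Variable a0 : T.
Hypothesis a0_A0 : a0 \in A0 E.

Local Notation m := n.-1./2.
Local Notation Ak k := (lay E k).1.1.
Local Notation Dk k := (lay E k).1.2.
Local Notation Ck k := (lay E k).2.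
Local Notation A_m_sources := ([forall x in Ak m.-1, [forall y, ~~ E x y]] &&
                              [forall x in Dk m.-1, [forall y, ~~ E y x]]).

Lemma no_short_link L : odd L -> L <= n - 2 -> ~ A0_link E L.
Proof. by move=> oL Ln /(A0_link_le oL) link; apply/no_link/link => //; lia. Qed.

Lemma coverA_lt i : i < m -> coverA E m i = Ak i.
Proof. by move=> im; rewrite /coverA im. Qed.

Lemma coverD_lt i : i < m -> coverD E m i = Dk i.
Proof. by move=> im; rewrite /coverD im. Qed.

Lemma coverA_m : coverA E m m = if A_m_sources
  then [set x | (x \notin Ck m.-1) && [forall y, ~~ E y x]]
  else [set x | (x \notin Ck m.-1) && [forall y, ~~ E x y]].
Proof. by rewrite /coverA ltnn; case: (lay E m.-1) => [[Ap Dp] Cp]. Qed.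

Lemma coverD_m : coverD E m m = if A_m_sources
  then [set x | (x \notin Ck m.-1) && [forall y, ~~ E x y]]
  else [set x | (x \notin Ck m.-1) && [forall y, ~~ E y x]].
Proof. by rewrite /coverD ltnn; case: (lay E m.-1) => [[Ap Dp] Cp]. Qed.

Lemma exists_adj x : exists y, adj E x y.
Proof.
have [y a0y] : exists y, E a0 y by move: a0_A0; rewrite mem_A0 => /andP [_ /existsP].
have [-> | x_a0] := eqVneq x a0; first by exists y; rewrite /adj a0y.
case/connectP: (E_connected x a0) => -[/= _ /esym x_eq | z p /= /andP [xz _] _].
  by rewrite x_eq eqxx in x_a0.
by exists z.
Qed.

Lemma exists_boundary_adj j : (exists x, x \notin Ck j) ->
  exists y z, [/\ y \in Ck j, z \notin Ck j & adj E y z].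
Proof.
case=> x xC; case: (boolP [exists y, exists z, [&& y \in Ck j, z \notin Ck j & adj E y z]]).
  by case/existsP=> y /existsP [z /and3P [yC zC yz]]; exists y, z.
move/negP=> no_edge; exfalso.
have closedC : closed (adj E) (Ck j).
  move=> y z yz; apply/idP/idP => [yC|zC]; apply/negPn/negP => nC; apply: no_edge.
    by apply/existsP; exists y; apply/existsP; exists z; rewrite yC nC.
  by apply/existsP; exists z; apply/existsP; exists y; rewrite zC nC /adj orbC.
by move: xC; rewrite -(closed_connect closedC (E_connected a0 x)) A0_sub_layC.
Qed.

Lemma A_m_sources_parity : (exists x, x \notin Ck m.-1) -> A_m_sources = ~~ odd m.
Proof.
move=> /exists_boundary_adj [y [z [yC zC yz]]].
have [p ep] : exists p, m = p.+2 by exists m.-2; lia.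
rewrite ep /= in yC zC *.
have yAD : (y \in Ak p.+1) || (y \in Dk p.+1).
  move: yC; rewrite mem_layCS => /or3P [yC|->|->] //; last by rewrite orbT.
  by have := layC_adj yC yz; rewrite (negbTE zC).
case: (boolP (odd p)) => op /=.
- apply/negbTE/negP => /andP [/forall_inP A_out /forall_inP D_in].
  case/orP: yAD => [yA|yD].
    have [_ yin] := layAS_phase yA; case/orP: yz => h.
      by have /forallP/(_ z) := A_out _ yA; rewrite h.
    by have := yin _ h; rewrite /= op.
  have [yout _] := layDS_phase yD; case/orP: yz => h.
    by have := yout _ h; rewrite /= op.
  by have /forallP/(_ z) := D_in _ yD; rewrite h.
- apply/andP; split; apply/forall_inP => x xAD; apply/forallP => w; apply/negP => h.
    by have := (layAS_phase xAD).1 _ h; rewrite /= op.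
  by have := (layDS_phase xAD).2 _ h; rewrite /= op.
Qed.

Lemma coverA_m_phase x : x \in coverA E m m ->
  [/\ x \notin Ck m.-1, forall z, E x z -> ~~ odd m & forall z, E z x -> odd m].
Proof.
rewrite coverA_m => xA.
have xC : x \notin Ck m.-1 by move: xA; case: ifP => _; rewrite inE => /andP [].
move: xA; rewrite (A_m_sources_parity (ex_intro _ x xC)).
case: ifP => om; rewrite inE => /andP [_ /forallP noarc]; split => // z xz;
  first [by move: (noarc z); rewrite xz | by move: om; case: (odd m)].
Qed.

Lemma coverD_m_phase x : x \in coverD E m m ->
  [/\ x \notin Ck m.-1, forall z, E x z -> odd m & forall z, E z x -> ~~ odd m].
Proof.
rewrite coverD_m => xD.
have xC : x \notin Ck m.-1 by move: xD; case: ifP => _; rewrite inE => /andP [].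
move: xD; rewrite (A_m_sources_parity (ex_intro _ x xC)).
case: ifP => om; rewrite inE => /andP [_ /forallP noarc]; split => // z xz;
  first [by move: (noarc z); rewrite xz | by move: om; case: (odd m)].
Qed.

Definition at_level x i := (0 < i -> x \notin Ck i.-1) /\ (i < m -> x \in Ck i).

Lemma coverA_at_level x i : i <= m -> x \in coverA E m i -> at_level x i.
Proof.
move=> im; have [im'|mi] := ltnP i m; last first.
  have -> : i = m by lia.
  by case/coverA_m_phase => xC _ _; split=> // /[!ltnn].
rewrite coverA_lt // => xA; split=> [i0|_]; last exact: layA_sub_layC.
by case: i i0 xA {im im'} => // k _; apply: layAS_notin_layC.
Qed.

Lemma coverD_at_level x i : 0 < i <= m -> x \in coverD E m i -> at_level x i.
Proof.
case/andP=> i0 im; have [im'|mi] := ltnP i m; last first.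
  have -> : i = m by lia.
  by case/coverD_m_phase => xC _ _; split=> // /[!ltnn].
rewrite coverD_lt // => xD; split=> [_|_]; last exact: layD_sub_layC.
by case: i i0 xD {im im'} => // k _; apply: layDS_notin_layC.
Qed.

Lemma at_level_le x i j : i <= m -> at_level x i -> at_level x j -> i <= j.
Proof.
move=> im [xi _] [_ xj]; rewrite leqNgt; apply/negP => ji.
have xCj := xj (leq_trans ji im).
by move: (xi (leq_ltn_trans (leq0n j) ji)); rewrite (subset_layC _ xCj) //; lia.
Qed.

Lemma at_level_inj x i j : i <= m -> j <= m -> at_level x i -> at_level x j -> i = j.
Proof.
by move=> im jm xi xj; apply/anti_leq; rewrite (at_level_le im xi xj) (at_level_le jm xj xi).
Qed.

Lemma at_level_adj x y i j :
  j <= m -> at_level x i -> at_level y j -> adj E x y -> j <= i.+1.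
Proof.
move=> jm [_ xi] [yj _] xy; rewrite leqNgt; apply/negP => lt.
have yC := layC_adj (xi (ltnW (leq_trans lt jm))) xy.
by move: (yj (leq_ltn_trans (leq0n _) lt)); rewrite (subset_layC _ yC) //; lia.
Qed.

Lemma coverA_phase x i : i <= m -> 0 < i -> x \in coverA E m i ->
  (forall z, E x z -> ~~ odd i) /\ (forall z, E z x -> odd i).
Proof.
move=> im i0; have [im'|mi] := ltnP i m; last first.
  have -> : i = m by lia.
  by case/coverA_m_phase.
by rewrite coverA_lt //; case: i i0 {im im'} => // k _; apply: layAS_phase.
Qed.

Lemma coverD_phase x i : 0 < i <= m -> x \in coverD E m i ->
  (forall z, E x z -> odd i) /\ (forall z, E z x -> ~~ odd i).
Proof.
case/andP=> i0 im; have [im'|mi] := ltnP i m; last first.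
  have -> : i = m by lia.
  by case/coverD_m_phase.
by rewrite coverD_lt //; case: i i0 {im im'} => // k _; apply: layDS_phase.
Qed.

Lemma phiRel_level x (j : 'I_n) : phiRel E x j -> at_level x (minn j (n - j)).
Proof.
case=> [[i [im [xi ->]]]|[i [im [xi ->]]]].
  by rewrite (_ : minn i (n - i) = i); [apply: coverA_at_level | lia].
by rewrite (_ : minn (n - i) (n - (n - i)) = i); [apply: coverD_at_level | lia].
Qed.

Lemma phiRel_phase x (j : 'I_n) : phiRel E x j ->
  (forall z, E x z -> ~~ odd j) /\ (forall z, E z x -> odd j || (j == 0 :> nat)).
Proof.
case=> [[i [im [xi ->]]]|[i [im [xi ->]]]].
  have [-> | i0] := posnP i; first by split.
  have [out in_] := coverA_phase im i0 xi.
  by split=> z xz; [exact: out xz | rewrite (in_ _ xz)].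
have [out in_] := coverD_phase im xi; rewrite oddB ?n_odd; last lia.
by split=> z xz; rewrite /= ?(out _ xz) ?(negPf (in_ _ xz)).
Qed.

Lemma phiRel_A0 x (j : 'I_n) : phiRel E x j -> j = 0 :> nat -> x \in A0 E.
Proof.
case=> [[i [_ [xi ->]]]|[i [im [_ ->]]]] => [i0|]; last lia.
by move: xi; rewrite i0 coverA_lt //; lia.
Qed.

(* Vertices of A_i and D_i are never adjacent below the last layer. *)
Lemma phiRel_sep x y (i j : 'I_n) : phiRel E x i -> phiRel E y j ->
  adj E x y -> i + j = n -> m <= minn i j.
Proof.
wlog ij : x y i j / i <= j.
  move=> hw xi yj xy ijn; have /orP [ij|ji] := leq_total i j; first exact: hw x y i j ij xi yj xy ijn.
  by rewrite minnC; apply: (hw y x j i ji yj xi); rewrite 1?addnC // /adj orbC.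
move=> xi yj xy ijn.
case: xi => [[k [km [xk ek]]]|[k [km [_ ek]]]]; last lia.
case: yj => [[l [lm [_ el]]]|[l [lm [yl el]]]]; first lia.
have lk : l = k by lia.
subst l; rewrite (_ : minn i j = k); last lia.
have [km'|//] := ltnP k m; exfalso.
have [k' ek'] : exists k', k = k'.+1 by exists k.-1; lia.
rewrite coverA_lt // ek' in xk; rewrite coverD_lt // ek' in yl.
by apply: (no_short_link (L := k'.+2 + k'.+1)); [lia | lia | apply: layAD_link xk yl xy].
Qed.

Lemma phiRel_exists x : exists j : 'I_n, phiRel E x j.
Proof.
have mkA i : i <= m -> x \in coverA E m i -> exists j : 'I_n, phiRel E x j.
  move=> im xi; have ilt : i < n by lia.
  by exists (Ordinal ilt); left; exists i.
have mkD i : 0 < i <= m -> x \in coverD E m i -> exists j : 'I_n, phiRel E x j.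
  move=> im xi; have ilt : n - i < n by lia.
  by exists (Ordinal ilt); right; exists i.
have [xC|xC] := boolP (x \in Ck m.-1).
  case: (layC_cases xC) => [xA0|[i [i0 im /orP [xA|xD]]]].
  - by apply: (mkA 0); rewrite ?coverA_lt //; lia.
  - by apply: (mkA i); rewrite ?coverA_lt //; lia.
  - by apply: (mkD i); rewrite ?coverD_lt //; lia.
have mm : 0 < m <= m by lia.
have [no_in|] := boolP [forall y, ~~ E y x].
  case sl : A_m_sources.
    by apply: (mkA m) => //; rewrite coverA_m sl inE xC no_in.
  by apply: (mkD m) => //; rewrite coverD_m sl inE xC no_in.
rewrite negb_forall => /existsP [z /negPn zx].
have no_out : [forall y, ~~ E x y].
  apply/forallP => y; apply/negP => xy; case/negP: (notin_layC_A0 xC).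
  by rewrite mem_A0; apply/andP; split; apply/existsP; [exists z | exists y].
case sl : A_m_sources.
  by apply: (mkD m) => //; rewrite coverD_m sl inE xC no_out.
by apply: (mkA m) => //; rewrite coverA_m sl inE xC no_out.
Qed.

Lemma phiRel_uniq x (i j : 'I_n) : phiRel E x i -> phiRel E x j -> i = j.
Proof.
move=> xi xj; apply: (AC_level_inj n_odd).
  by apply: at_level_inj _ _ (phiRel_level xi) (phiRel_level xj); lia.
have [[iout iin] [jout jin]] := (phiRel_phase xi, phiRel_phase xj).
have [z /orP [xz|zx]] := exists_adj x.
  by apply: Or31; rewrite (negPf (iout _ xz)) (negPf (jout _ xz)).
case/orP: (iin _ zx) => [io|/eqP i0]; last exact: Or32.
case/orP: (jin _ zx) => [jo|/eqP j0]; last exact: Or33.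
by apply: Or31; rewrite io jo.
Qed.

Lemma phiRel_AC x y (i j : 'I_n) :
  E x y -> phiRel E x i -> phiRel E y j -> Defs.AC i j.
Proof.
move=> xy xi yj; have n_gt2 : 2 < n by lia.
have [axy ayx] : adj E x y /\ adj E y x by rewrite /adj xy orbT.
have [xl yl] := (phiRel_level xi, phiRel_level yj).
apply: (AC_of_levels n_odd).
- exact: (phiRel_phase xi).1 _ xy.
- exact: (phiRel_phase yj).2 _ xy.
- by apply: at_level_adj xl yl axy; lia.
- by apply: at_level_adj yl xl ayx; lia.
- exact: phiRel_sep xi yj axy.
move=> i0; rewrite lt0n; apply/negP => /eqP j0.
apply: (no_short_link (L := 1)) => //; first lia.
exists x, y; split; [exact: phiRel_A0 xi i0 | exact: phiRel_A0 yj j0 |].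
by apply: alt_walk1; rewrite /alt_arc /= xy.
Qed.

Theorem cover_hom_of_no_link : cover_hom E n.
Proof.
split=> [x | x y i j xy xi yj]; last exact: phiRel_AC xy xi yj.
have [j xj] := phiRel_exists x; exists j; split=> // j'; exact: phiRel_uniq.
Qed.

End CyclicCover.

Lemma homAC_of_cover_hom (T : finType) (E : rel T) n : cover_hom E n -> homAC E n.
Proof.
case=> phi_fun phi_AC.
have [f fP] : exists f : T -> 'I_n, forall x, phiRel E x (f x).
  by apply: fin_all_exists => x; have [j [xj _]] := phi_fun x; exists j.
by exists f => x y xy; apply: phi_AC xy (fP x) (fP y).
Qed.

Lemma homAC_iff_no_A0_link (T : finType) (E : rel T) n :
  4 < n -> odd n -> wconnected E -> homAC E n <-> ~ A0_link E (n - 2).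
Proof.
move=> n_gt4 n_odd conn; split=> [hom | no_link].
  by apply: homAC_no_A0_link hom _; lia.
have [/existsP [a aA0]|noA0] := boolP [exists a, a \in A0 E].
  exact/homAC_of_cover_hom/(cover_hom_of_no_link n_gt4 n_odd conn no_link aA0).
apply: homAC_without_A0 => // [|x]; first lia.
by apply: contraNN noA0 => xA0; apply/existsP; exists x.
Qed.

Lemma no_semiwalk_patQ_iff (T : finType) (E : rel T) n : odd n -> 2 < n ->
  (forall l, ~~ odd l -> 4 <= l <= n.+1 -> ~ has_semiwalk E (patQ l)) <->
  ~ A0_link E (n - 2).
Proof.
move=> n_odd n_gt2; split=> [no_walk link | no_link l el /andP [l4 ln]].
  apply: (no_walk n.+1); [by rewrite /= n_odd | lia |].
  by apply/semiwalk_patQP; rewrite /= ?n_odd // subSS subn2.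
move/(semiwalk_patQP E el l4) => /A0_link_le link; apply/no_link/link; lia.
Qed.

Lemma homQ_iff_A0_link (T : finType) (E : rel T) n : odd n -> 2 < n ->
  homQ E n.+1 <-> A0_link E (n - 2).
Proof.
move=> n_odd n_gt2; apply: iff_trans (homQ_semiwalkP E _) _ => //.
have -> : n - 2 = n.+1 - 3 by [].
by apply: semiwalk_patQP; rewrite /= ?n_odd.
Qed.

Theorem mainTheorem7 (T : finType) (E : rel T) (n : nat) :
  5 <= n -> odd n -> oriented E -> wconnected E ->
  [/\ (homAC E n <->
        (forall l, ~~ odd l -> 4 <= l <= n.+1 -> ~ has_semiwalk E (patQ l))),
      ((forall l, ~~ odd l -> 4 <= l <= n.+1 -> ~ has_semiwalk E (patQ l))
        <-> ~ homQ E n.+1)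
    & ((exists v, [exists y, E y v] && [exists y, E v y]) ->
        (homAC E n <-> cover_hom E n))].
Proof.
move=> n_gt4 n_odd _ conn; have n_gt2 : 2 < n by lia.
have hom_link := homAC_iff_no_A0_link n_gt4 n_odd conn.
have walk_link := no_semiwalk_patQ_iff E n_odd n_gt2.
have homQ_link := homQ_iff_A0_link E n_odd n_gt2.
split.
- exact: iff_trans hom_link (iff_sym walk_link).
- by apply: iff_trans walk_link _; split=> no_link /homQ_link.
case=> v vA0; split; last exact: homAC_of_cover_hom.
have vA0' : v \in A0 E by rewrite inE.
by move/hom_link=> no_link; exact: (cover_hom_of_no_link n_gt4 n_odd conn no_link vA0').
Qed.
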